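(* For each $N\ge1$ (with $h=1/(N+1)$) let $Q_h=[q_{ij}(h)]_{1\le i,j\le N}\in\mathcal M_N(\mathbb{C})$ be tridiagonal ($q_{ij}(h)=0$ if $|i-j|>1$) and assume: (1) $\max_{1\le j\le N}\{|q_{j,j-1}(h)|,|q_{j,j+1}(h)|\}\to0$ as $h\to0$; (2) $\frac1h\max_{1\le j\le N}|q_{j,j-1}(h)+q_{jj}(h)+q_{j,j+1}(h)|\to0$ as $h\to0$. Let $Y_h=[y_j(h)]_{1\le j\le N}$ and $\Theta_h=[\theta_j(h)]_{1\le j\le N}$ be vectors in $\mathbb{C}^N$ for which there is a constant $C>0$, independent of $h$, with $\max\{\langle K_hY_h,Y_h\rangle,\langle K_h\Theta_h,\Theta_h\rangle\}\le C$. Then $\langle Q_hY_h,\Theta_h\rangle\to0$ as $h\to0$.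
   Context: $K_h=\frac1h\mathrm{tridiag}(-1,2,-1)\in\mathcal M_N(\mathbb{R})$; $\langle U,W\rangle=\sum_j u_j\overline{w_j}$. In conditions (1)-(2), the symbols $q_{1,0}(h)$ and $q_{N,N+1}(h)$, which are not entries of $Q_h$, denote given complex numbers (e.g. $0$). *)

From HB Require Import structures.
From mathcomp Require Import all_boot all_order all_algebra.
From mathcomp Require Import complex.
From mathcomp Require Import reals.
Set Implicit Arguments. Unset Strict Implicit. Unset Printing Implicit Defensive.
Import Order.TTheory GRing.Theory Num.Theory.
Local Open Scope ring_scope.
Local Open Scope complex_scope.

(* Real sequences indexed by N; "h = 1/(N+1) -> 0" is "N -> oo". *)
Definition tends_to0 (R : realType) (u : nat -> R) : Prop :=
  forall e : R, 0 < e -> exists M : nat, forall N : nat, (M <= N)%N -> `|u N| < e.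

Definition hN (R : realType) (N : nat) : R := (N.+1%:R)^-1.

(* 1-based entry q_{i,j} of the N x N matrix Q, extended by the given
   boundary numbers q_{1,0} = lo and q_{N,N+1} = hi, and 0 elsewhere. *)
Definition qent (R : realType) (N : nat) (Q : 'M[R[i]]_N) (lo hi : R[i])
    (i j : nat) : R[i] :=
  if (i == 1%N) && (j == 0%N) then lo
  else if (i == N) && (j == N.+1) then hi
  else if (0 < i)%N && (0 < j)%N then
    match insub i.-1 : option 'I_N, insub j.-1 : option 'I_N with
    | Some i', Some j' => Q i' j'
    | _, _ => 0
    end
  else 0.

Definition tridiagonal (R : realType) (N : nat) (Q : 'M[R[i]]_N) : Prop :=
  forall i j : 'I_N, (1 < `|(i : int) - (j : int)|)%N -> Q i j = 0.

Definition Kh (R : realType) (N : nat) : 'M[R[i]]_N :=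
  \matrix_(i < N, j < N)
    ((hN R N)^-1%:C *
     (if i == j then 2 else if (`|(i : int) - (j : int)| == 1)%N then -1 else 0)).

Definition cdot (R : realType) (N : nat) (U W : 'cV[R[i]]_N) : R[i] :=
  \sum_(j < N) U j ord0 * (W j ord0)^*.

Definition cabs (R : realType) (z : R[i]) : R := complex.Re `|z|.

(* Pad Y with the Dirichlet values y_0 = y_(N+1) = 0.  Summation by parts gives
   <K_h Y, Y> = (N+1) sum_k |y_(k+1) - y_k|^2, so the bound C controls this
   discrete energy and, by Cauchy-Schwarz, every |y_j|^2.  Row j of Q_h Y is
     (q_(j,j-1) + q_(j,j) + q_(j,j+1)) y_j - q_(j,j-1) (y_j - y_(j-1))
       + q_(j,j+1) (y_(j+1) - y_j),
   so by Cauchy-Schwarz again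
     |<Q_h Y, Theta>| <= C (h^-1 max_j |row sum j| + 2 max_j |off-diagonal q|),
   and both terms tend to 0 by (2) and (1). *)

From HB Require Import structures.
From mathcomp Require Import all_boot all_order all_algebra.
From mathcomp Require Import complex.
From mathcomp Require Import reals.
From mathcomp Require Import ring lra zify.
Import Order.TTheory GRing.Theory Num.Theory.
Local Open Scope ring_scope.
Local Open Scope complex_scope.

Section RealSums.
Context {R : realFieldType}.

Lemma sum_mul_sqr_le {I : Type} (r : seq I) (x y : I -> R) :
  (\sum_(i <- r) x i * y i) ^+ 2
  <= (\sum_(i <- r) x i ^+ 2) * (\sum_(i <- r) y i ^+ 2).
Proof.
pose S (F : I -> I -> R) := \sum_(i <- r) \sum_(j <- r) F i j.
have lhsE : (\sum_(i <- r) x i * y i) ^+ 2 = S (fun i j => x i * y i * (x j * y j)).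
  by rewrite expr2 mulr_suml; apply: eq_bigr => i _; rewrite mulr_sumr.
have rhsE : (\sum_(i <- r) x i ^+ 2) * (\sum_(i <- r) y i ^+ 2)
    = S (fun i j => x i ^+ 2 * y j ^+ 2).
  by rewrite mulr_suml; apply: eq_bigr => i _; rewrite mulr_sumr.
have rhs_sym : S (fun i j => x i ^+ 2 * y j ^+ 2) = S (fun i j => x j ^+ 2 * y i ^+ 2).
  exact: exchange_big.
(* Lagrange's identity: twice the gap is a sum of squares. *)
have : 0 <= S (fun i j => (x i * y j - x j * y i) ^+ 2).
  by apply: sumr_ge0 => i _; apply: sumr_ge0 => j _; apply: sqr_ge0.
have -> : S (fun i j => (x i * y j - x j * y i) ^+ 2)
    = S (fun i j => x i ^+ 2 * y j ^+ 2) + S (fun i j => x j ^+ 2 * y i ^+ 2)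
      - 2 * S (fun i j => x i * y i * (x j * y j)).
  rewrite /S mulr_sumr -big_split -sumrB /=; apply: eq_bigr => i _.
  rewrite mulr_sumr -big_split -sumrB /=; apply: eq_bigr => j _; ring.
rewrite lhsE rhsE -rhs_sym; lra.
Qed.

Lemma sum_mul_le_of_sum_sqr {x b : nat -> R} {n : nat} {m C : R} :
  0 < m -> n%:R <= m -> m * \sum_(0 <= i < n) x i ^+ 2 <= C ->
  (forall i, (i < n)%N -> b i ^+ 2 <= C) ->
  \sum_(0 <= i < n) x i * b i <= C.
Proof.
move=> m0 nm Ex Eb.
have x0 : 0 <= \sum_(0 <= i < n) x i ^+ 2 by apply: sumr_ge0 => i _; apply: sqr_ge0.
have C0 : 0 <= C := le_trans (mulr_ge0 (ltW m0) x0) Ex.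
have Eb' : \sum_(0 <= i < n) b i ^+ 2 <= m * C.
  apply: le_trans (_ : \sum_(0 <= i < n) C <= _).
    by apply: ler_sum_nat => i /andP[_ /Eb].
  by rewrite sumr_const_nat subn0 -mulr_natl ler_wpM2r.
have b0 : 0 <= \sum_(0 <= i < n) b i ^+ 2 by apply: sumr_ge0 => i _; apply: sqr_ge0.
have CS := sum_mul_sqr_le (index_iota 0 n) x b.
have : m * (\sum_(0 <= i < n) x i * b i) ^+ 2 <= m * C ^+ 2 by nra.
rewrite ler_pM2l // => sqr_le; nra.
Qed.
End RealSums.

Section TendsTo0.
Context {R : realType}.
Implicit Types u v z : nat -> R.

Lemma tends_to0D u v :
  tends_to0 u -> tends_to0 v -> tends_to0 (fun N => u N + v N).
Proof.
move=> u0 v0 e e0; have e20 : 0 < e / 2 by rewrite divr_gt0.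
have [[Mu Hu] [Mv Hv]] := (u0 _ e20, v0 _ e20).
exists (maxn Mu Mv) => N; rewrite geq_max => /andP[/Hu uN /Hv vN].
by apply: le_lt_trans (ler_normD _ _) _; rewrite [e](splitr e) ltrD.
Qed.

Lemma tends_to0Z (c : R) u : tends_to0 u -> tends_to0 (fun N => c * u N).
Proof.
move=> u0 e e0; have c1 : 0 < `|c| + 1 by rewrite ltr_wpDl.
have [M HM] := u0 _ (divr_gt0 e0 c1); exists M => N /HM uN; rewrite normrM.
apply: le_lt_trans (_ : `|c| * (e / (`|c| + 1)) < e).
  by rewrite ler_wpM2l // ltW.
by rewrite mulrCA gtr_pMr // ltr_pdivrMr // mul1r ltrDl.
Qed.

Lemma tends_to0_le u z (M : nat) :
  (forall N, (M <= N)%N -> `|z N| <= u N) -> tends_to0 u -> tends_to0 z.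
Proof.
move=> zu u0 e /u0 [M' HM']; exists (maxn M M') => N.
rewrite geq_max => /andP[/zu zN /HM' uN].
by apply: le_lt_trans zN (le_lt_trans (ler_norm _) uN).
Qed.
End TendsTo0.

Lemma big_nat_window3 (V : nmodType) (F : nat -> V) (a n : nat) :
  (a + 3 <= n)%N -> (forall j, (j < a)%N || (a + 3 <= j)%N -> F j = 0) ->
  \sum_(0 <= j < n) F j = F a + F a.+1 + F a.+2.
Proof.
move=> a3n F0.
rewrite (@big_cat_nat _ _ _ a) //=; last lia.
rewrite (@big_cat_nat _ _ _ (a + 3) a) //=; last lia.
have -> : \sum_(0 <= j < a) F j = 0.
  by rewrite big_nat big1 // => j /andP[_ ja]; rewrite F0 ?ja.
have -> : \sum_(a + 3 <= j < n) F j = 0.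
  by rewrite big_nat big1 // => j /andP[aj _]; rewrite F0 ?aj ?orbT.
rewrite add0r addr0 addn3 !big_nat_recr ?big_geq //; last by apply/leqW/leqnSn.
by rewrite -[LHS]/(0 + F a + F a.+1 + F a.+2) add0r.
Qed.

Section Modulus.
Context {R : realType}.
Implicit Types z w : R[i].

Lemma cabsE z : (cabs z)%:C = `|z|.
Proof. by rewrite /cabs normc_def. Qed.

Lemma cabs_ge0 z : 0 <= cabs z.
Proof. by rewrite -lecR cabsE normr_ge0. Qed.

Lemma ler_cabsD z w : cabs (z + w) <= cabs z + cabs w.
Proof. by rewrite -lecR rmorphD /= !cabsE ler_normD. Qed.

Lemma cabsM z w : cabs (z * w) = cabs z * cabs w.
Proof. by apply: complexI; rewrite rmorphM /= !cabsE normrM. Qed.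

Lemma cabsN z : cabs (- z) = cabs z.
Proof. by apply: complexI; rewrite !cabsE normrN. Qed.

Lemma cabsJ z : cabs z^* = cabs z.
Proof. by apply: complexI; rewrite !cabsE normcJ. Qed.

Lemma cabs_sqr z : ((cabs z) ^+ 2)%:C = z * z^*.
Proof. by rewrite rmorphXn /= cabsE sqr_normc. Qed.

Lemma ler_cabs_sum {I : Type} (r : seq I) (F : I -> R[i]) :
  cabs (\sum_(i <- r) F i) <= \sum_(i <- r) cabs (F i).
Proof.
rewrite -lecR cabsE rmorph_sum; apply: le_trans (ler_norm_sum _ _ _) _.
by under eq_bigr do rewrite -cabsE.
Qed.

Lemma cabs_row_le (ql qd qr w0 w1 w2 t : R[i]) (rmax amax C : R) :
  cabs (ql + qd + qr) <= rmax -> cabs ql <= amax -> cabs qr <= amax ->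
  cabs w1 ^+ 2 <= C -> cabs t ^+ 2 <= C ->
  cabs ((ql * w0 + qd * w1 + qr * w2) * t^*)
  <= rmax * C + amax * (cabs (w1 - w0) * cabs t)
     + amax * (cabs (w2 - w1) * cabs t).
Proof.
move=> Hr Hl Hq Hw Ht.
have -> : (ql * w0 + qd * w1 + qr * w2) * t^*
    = ((ql + qd + qr) * w1 + - ql * (w1 - w0) + qr * (w2 - w1)) * t^* by ring.
have tri : cabs ((ql + qd + qr) * w1 + - ql * (w1 - w0) + qr * (w2 - w1))
    <= cabs (ql + qd + qr) * cabs w1 + cabs ql * cabs (w1 - w0)
       + cabs qr * cabs (w2 - w1).
  apply: le_trans (ler_cabsD _ _) _; rewrite -!cabsM -(cabsN (ql * _)) -mulNr.
  by rewrite lerD2r ler_cabsD.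
have w10 := cabs_ge0 w1; have t0 := cabs_ge0 t.
have wt : cabs w1 * cabs t <= C by nra.
rewrite cabsM cabsJ; apply: le_trans (ler_wpM2r t0 tri) _.
rewrite !mulrDl -!mulrA !lerD ?ler_pM ?mulr_ge0 ?cabs_ge0 //.
Qed.
End Modulus.

Lemma sum_laplacian_conj (R : realType) (a : nat -> R[i]) (n : nat) :
  a 0 = 0 -> a n.+1 = 0 ->
  \sum_(0 <= k < n) (2 * a k.+1 - a k - a k.+2) * (a k.+1)^*
  = \sum_(0 <= k < n.+1) (a k.+1 - a k) * (a k.+1 - a k)^*.
Proof.
move=> a0 an.
under [RHS]eq_bigr => k _ do rewrite rmorphB /= mulrBr.
rewrite sumrB big_nat_recr //= big_nat_recl //= an a0 !rmorph0 !mulr0 addr0 add0r.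
by rewrite -sumrB; apply: eq_bigr => k _; ring.
Qed.

Section Dirichlet.
Context {R : realType} {N : nat}.
Implicit Types (Y : 'cV[R[i]]_N) (M : 'M[R[i]]_N).

(* [zext Y j] is the 1-based entry [y_j], padded with the Dirichlet boundary
   values [y_0 = y_(N+1) = 0] (and with 0 beyond). *)
Definition zext Y (j : nat) : R[i] :=
  if j is k.+1 then (if insub k : option 'I_N is Some k' then Y k' ord0 else 0)
  else 0.

Lemma zext0 Y : zext Y 0 = 0.
Proof. by []. Qed.

Lemma zextS Y (k : 'I_N) : zext Y k.+1 = Y k ord0.
Proof. by rewrite /zext valK. Qed.

Lemma zext_out Y j : (N < j)%N -> zext Y j = 0.
Proof. by case: j => // k Nk; rewrite /zext insubF // ltnNge -ltnS Nk. Qed.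

Lemma qentE M lo hi (i j : 'I_N) : qent M lo hi i.+1 j.+1 = M i j.
Proof.
rewrite /qent /= andbF.
have -> : (j.+1 == N.+1) = false by rewrite eqSS ltn_eqF.
by rewrite andbF /= !valK.
Qed.

Lemma mulmx_tridiagonal M (f : nat -> nat -> R[i]) Y (i : 'I_N) :
  tridiagonal M -> (forall i j : 'I_N, M i j = f i.+1 j.+1) ->
  (M *m Y) i ord0
  = f i.+1 i * zext Y i + f i.+1 i.+1 * zext Y i.+1 + f i.+1 i.+2 * zext Y i.+2.
Proof.
move=> Mtri Mf; rewrite mxE.
pose F j := f i.+1 j * zext Y j.
have -> : \sum_j M i j * Y j ord0 = \sum_(0 <= j < N.+2) F j.
  rewrite big_nat_recl // big_nat_recr //= /F zext0 zext_out // !mulr0 add0r addr0.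
  by rewrite big_mkord; apply: eq_bigr => j _; rewrite Mf zextS.
have iN := ltn_ord i.
apply: big_nat_window3 => [|[|k] far]; rewrite /F ?zext0 ?mulr0 //; first lia.
have [kN|Nk] := ltnP k N; last by rewrite zext_out ?mulr0.
by rewrite -[k]/(val (Ordinal kN)) zextS -Mf Mtri ?mul0r //=; lia.
Qed.

Lemma Kh_tridiagonal : tridiagonal (Kh R N).
Proof.
move=> i j ij; rewrite mxE.
have -> : (i == j) = false by apply/negbTE/eqP => eij; move: ij; rewrite eij; lia.
have -> : (`|(i : int) - (j : int)| == 1)%N = false by apply/negbTE/eqP; lia.
by rewrite mulr0.
Qed.

Lemma Kh_mulmx Y (i : 'I_N) :
  (Kh R N *m Y) i ord0 = N.+1%:R * (2 * zext Y i.+1 - zext Y i - zext Y i.+2).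
Proof.
pose f (j j' : nat) : R[i] := N.+1%:R *
  (if j == j' then 2 else if (`|(j : int) - (j' : int)| == 1)%N then -1 else 0).
rewrite (@mulmx_tridiagonal _ f _ _ Kh_tridiagonal) => [|i' j']; last first.
  rewrite mxE /f /hN invrK rmorph_nat eqSS.
  by have -> : `|(i'.+1 : int) - (j'.+1 : int)|%N = `|(i' : int) - (j' : int)|%N by lia.
rewrite /f eqxx.
have -> : (i.+1 == i) = false by lia.
have -> : (i.+1 == i.+2) = false by lia.
have -> : (`|(i.+1 : int) - (i : int)| == 1)%N by lia.
have -> : (`|(i.+1 : int) - (i.+2 : int)| == 1)%N by lia.
ring.
Qed.

Definition dirichlet_energy Y : R :=
  \sum_(0 <= k < N.+1) cabs (zext Y k.+1 - zext Y k) ^+ 2.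

Lemma dirichlet_energy_ge0 Y : 0 <= dirichlet_energy Y.
Proof. by apply: sumr_ge0 => k _; apply: sqr_ge0. Qed.

Lemma cdot_Kh Y : cdot (Kh R N *m Y) Y = (N.+1%:R * dirichlet_energy Y)%:C.
Proof.
rewrite /cdot rmorphM rmorph_nat rmorph_sum /=.
under [in RHS]eq_bigr => k _ do rewrite cabs_sqr.
rewrite -sum_laplacian_conj ?zext0 ?zext_out // big_mkord mulr_sumr.
by apply: eq_bigr => i _; rewrite Kh_mulmx zextS mulrA.
Qed.

Lemma cabs_zext_sqr_le Y j :
  cabs (zext Y j) ^+ 2 <= N.+1%:R * dirichlet_energy Y.
Proof.
have E0 := dirichlet_energy_ge0 Y.
have [Nj|jN] := ltnP N j.
  by rewrite zext_out // /cabs normr0 expr0n mulr_ge0.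
pose d k := cabs (zext Y k.+1 - zext Y k).
have d0 k : 0 <= d k by apply: cabs_ge0.
have le_sum : cabs (zext Y j) <= \sum_(0 <= k < N.+1) d k.
  rewrite -[zext Y j]subr0 -(zext0 Y) -telescope_sumr //.
  apply: le_trans (ler_cabs_sum _ _) _.
  rewrite [X in _ <= X](@big_cat_nat _ _ _ j) ?leqW //=.
  by apply: ler_wpDr => //; apply: sumr_ge0.
have := sum_mul_sqr_le (index_iota 0 N.+1) d (fun=> 1).
rewrite sumr_const_nat expr1n subn0; under eq_bigr do rewrite mulr1.
rewrite mulrC => CS; apply: le_trans CS.
by rewrite ler_sqr ?nnegrE ?cabs_ge0 ?sumr_ge0.
Qed.
End Dirichlet.

Section Bound.
Context {R : realType} {N : nat}.
Variables (Q : 'M[R[i]]_N) (lo hi : R[i]).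

Let q := qent Q lo hi.

Definition offdiag_max : R :=
  \big[Num.max/0]_(1 <= j < N.+1) Num.max (cabs (q j j.-1)) (cabs (q j j.+1)).

Definition rowsum_max : R :=
  \big[Num.max/0]_(1 <= j < N.+1) cabs (q j j.-1 + q j j + q j j.+1).

Lemma cabs_cdot_le (Y Th : 'cV[R[i]]_N) (C : R) :
  tridiagonal Q ->
  N.+1%:R * dirichlet_energy Y <= C -> N.+1%:R * dirichlet_energy Th <= C ->
  cabs (cdot (Q *m Y) Th) <= C * (N.+1%:R * rowsum_max + 2 * offdiag_max).
Proof.
move=> Qtri EY ETh.
have rowsE : cdot (Q *m Y) Th = \sum_(0 <= i < N)
    (q i.+1 i * zext Y i + q i.+1 i.+1 * zext Y i.+1 + q i.+1 i.+2 * zext Y i.+2)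
    * (zext Th i.+1)^*.
  rewrite /cdot big_mkord; apply: eq_bigr => i _.
  rewrite (@mulmx_tridiagonal _ _ Q q Y i Qtri) ?zextS // => i' j'.
  by rewrite /q qentE.
have row_mem i : (i < N)%N -> i.+1 \in index_iota 1 N.+1.
  by rewrite mem_index_iota; lia.
have rowsum_le i : (i < N)%N ->
    cabs (q i.+1 i + q i.+1 i.+1 + q i.+1 i.+2) <= rowsum_max.
  by move/row_mem/le_bigmax_seq; apply.
have offdiag_le i : (i < N)%N ->
    Num.max (cabs (q i.+1 i)) (cabs (q i.+1 i.+2)) <= offdiag_max.
  by move/row_mem/le_bigmax_seq; apply.
have w_le j : cabs (zext Y j) ^+ 2 <= C := le_trans (cabs_zext_sqr_le Y j) EY.
have t_le j : cabs (zext Th j) ^+ 2 <= C := le_trans (cabs_zext_sqr_le Th j) ETh.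
rewrite rowsE; apply: le_trans (ler_cabs_sum _ _) _.
pose x k := cabs (zext Y k.+1 - zext Y k); pose b k := cabs (zext Th k.+1).
apply: le_trans (_ : \sum_(0 <= i < N) (rowsum_max * C + offdiag_max * (x i * b i)
    + offdiag_max * (x i.+1 * b i)) <= _).
  apply: ler_sum_nat => i /andP[_ /[dup] iN /offdiag_le].
  rewrite ge_max => /andP[lower_le upper_le].
  exact: cabs_row_le (rowsum_le i iN) lower_le upper_le (w_le _) (t_le _).
rewrite !big_split /= sumr_const_nat subn0 -!mulr_sumr.
have x_le : N.+1%:R * \sum_(0 <= i < N) x i ^+ 2 <= C.
  apply: le_trans EY; rewrite ler_pM2l ?ltr0Sn // /dirichlet_energy big_nat_recr //=.
  by apply: ler_wpDr; [exact: sqr_ge0 | exact: lexx].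
have x_le' : N.+1%:R * \sum_(0 <= i < N) x i.+1 ^+ 2 <= C.
  apply: le_trans EY; rewrite ler_pM2l ?ltr0Sn // /dirichlet_energy big_nat_recl //=.
  by apply: ler_wpDl; [exact: sqr_ge0 | exact: lexx].
have NN : (N%:R : R) <= N.+1%:R by rewrite ler_nat.
have S1 := sum_mul_le_of_sum_sqr (ltr0Sn _ _) NN x_le (fun i _ => t_le i.+1).
have S2 := sum_mul_le_of_sum_sqr (x := fun i => x i.+1) (ltr0Sn _ _) NN x_le'
  (fun i _ => t_le i.+1).
have C0 : 0 <= C := le_trans (mulr_ge0 (ler0n _ _) (dirichlet_energy_ge0 Y)) EY.
have rmax0 : 0 <= rowsum_max := bigmax_ge_id _ _ _ _.
have amax0 : 0 <= offdiag_max := bigmax_ge_id _ _ _ _.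
have := ler_wpM2l amax0 S1; have := ler_wpM2l amax0 S2.
rewrite -mulr_natr; nra.
Qed.
End Bound.

Theorem lemma6 (R : realType)
  (Q : forall N : nat, 'M[R[i]]_N) (lo hi : nat -> R[i])
  (Y Th : forall N : nat, 'cV[R[i]]_N) :
  (forall N : nat, (0 < N)%N -> tridiagonal (Q N)) ->
  tends_to0 (fun N : nat =>
    \big[Num.max/0]_(1 <= j < N.+1)
      Num.max (cabs (qent (Q N) (lo N) (hi N) j j.-1))
              (cabs (qent (Q N) (lo N) (hi N) j j.+1))) ->
  tends_to0 (fun N : nat =>
    (hN R N)^-1 *
    \big[Num.max/0]_(1 <= j < N.+1)
      cabs (qent (Q N) (lo N) (hi N) j j.-1 + qent (Q N) (lo N) (hi N) j j
             + qent (Q N) (lo N) (hi N) j j.+1)) ->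
  (exists C : R, 0 < C /\ forall N : nat, (0 < N)%N ->
     cdot (Kh R N *m Y N) (Y N) <= C%:C /\
     cdot (Kh R N *m Th N) (Th N) <= C%:C) ->
  tends_to0 (fun N : nat => cabs (cdot (Q N *m Y N) (Th N))).
Proof.
move=> Qtri offdiag0 rowsum0 [C [_ HC]].
pose bound N := C * ((hN R N)^-1 * rowsum_max (Q N) (lo N) (hi N)
                     + 2 * offdiag_max (Q N) (lo N) (hi N)).
apply: (@tends_to0_le _ bound _ 1) => [N N0|].
  have [EY ETh] := HC N N0.
  rewrite ger0_norm ?cabs_ge0 // /bound /hN invrK.
  by apply: cabs_cdot_le (Qtri N N0) _ _; rewrite -lecR -cdot_Kh.
by apply/tends_to0Z/tends_to0D => //; apply: tends_to0Z.
Qed.
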